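(* Let $m\ge1$. The map sending the double coset $\Gamma(4m)\,g\,\Gamma_\ell(2)$ of $g\in\Gamma_{2m}(2)$ to the cohomology class of $f_{\tau(g)g^{-1}}$ is a well-defined bijection $$\Gamma(4m)\backslash\Gamma_{2m}(2)/\Gamma_\ell(2)\ \cong\ H^1(\mathbb C/\mathbb R,\Gamma(4m))$$ (induced by the short exact sequence $1\to\Gamma(4m)\to\Gamma_{2m}(2)\to\Gamma(4m)\backslash\Gamma_{2m}(2)\to1$).
   Context: $\mathbf{Sp}(2n,\mathbb Z)$: integral $2n\times2n$ matrices $g=\begin{pmatrix}A&B\\C&D\end{pmatrix}$ with ${}^tgJg=J$, $J=\begin{pmatrix}0&I\\-I&0\end{pmatrix}$. $\tau\begin{pmatrix}A&B\\C&D\end{pmatrix}=\begin{pmatrix}A&-B\\-C&D\end{pmatrix}$. $\Gamma(4m)=\{\gamma\in\mathbf{Sp}(2n,\mathbb Z):\gamma\equiv I\bmod4m\}$; $\Gamma_{2m}(2)=\{\begin{pmatrix}A&B\\C&D\end{pmatrix}\in\mathbf{Sp}(2n,\mathbb Z):A,D\equiv I\bmod2,\ B,C\equiv0\bmod2m\}$; $\Gamma_\ell(2)=\{U\in\mathbf{GL}(n,\mathbb Z):U\equiv I\bmod2\}$ embedded via $U\mapsto\mathrm{diag}(U,{}^tU^{-1})$. For $\gamma\in\Gamma(4m)$ with $\gamma\tau(\gamma)=I$, $f_\gamma$ is the 1-cocycle of $\mathrm{Gal}(\mathbb C/\mathbb R)=\{1,\tau\}$ with $f_\gamma(\tau)=\gamma$;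 $f_\gamma,f_{\gamma'}$ are cohomologous if $\gamma'=\tau(h)\gamma h^{-1}$ for some $h\in\Gamma(4m)$; $H^1(\mathbb C/\mathbb R,\Gamma(4m))$ is the set of classes. *)

From HB Require Import structures.
From mathcomp Require Import all_boot all_order all_algebra.
Set Implicit Arguments. Unset Strict Implicit. Unset Printing Implicit Defensive.
Import Order.TTheory GRing.Theory Num.Theory.
Local Open Scope ring_scope.

Notation imx n := 'M[int]_(n + n).

Definition congr_mx (k : int) (p q : nat) (A B : 'M[int]_(p, q)) : Prop :=
  forall i j, (k %| A i j - B i j)%Z.

Definition Jmx (n : nat) : imx n := block_mx 0 1%:M (- 1%:M) 0.

Definition symplectic (n : nat) (g : imx n) : Prop := g^T *m Jmx n *m g = Jmx n.

Definition tau (n : nat) (g : imx n) : imx n :=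
  block_mx (ulsubmx g) (- ursubmx g) (- dlsubmx g) (drsubmx g).

Definition Gamma4m (n m : nat) (g : imx n) : Prop :=
  symplectic g /\ congr_mx (4 * m)%N%:Z g 1%:M.

Definition Gamma2m2 (n m : nat) (g : imx n) : Prop :=
  [/\ symplectic g,
      congr_mx 2 (ulsubmx g) 1%:M, congr_mx 2 (drsubmx g) 1%:M,
      congr_mx (2 * m)%N%:Z (ursubmx g) 0 & congr_mx (2 * m)%N%:Z (dlsubmx g) 0].

Definition Gammal2 (n : nat) (h : imx n) : Prop :=
  exists U : 'M[int]_n,
    [/\ U \in unitmx, congr_mx 2 U 1%:M & h = block_mx U 0 0 (invmx U^T)].

(* 1-cocycles: gamma in Gamma(4m) with gamma tau(gamma) = I *)
Definition cocycle (n m : nat) (c : imx n) : Prop :=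
  Gamma4m m c /\ c *m tau c = 1%:M.

(* f_c and f_c' cohomologous: c' = tau(h) c h^{-1}, h in Gamma(4m) *)
Definition cohomologous (n m : nat) (c c' : imx n) : Prop :=
  exists h : imx n, Gamma4m m h /\ c' = tau h *m c *m invmx h.

Definition same_dcoset (n m : nat) (g g' : imx n) : Prop :=
  exists a u : imx n, [/\ Gamma4m m a, Gammal2 u & g' = a *m g *m u].

Definition cocycle_of (n : nat) (g : imx n) : imx n := tau g *m invmx g.

From HB Require Import structures.
From mathcomp Require Import all_boot all_order all_algebra.
Set Implicit Arguments. Unset Strict Implicit. Unset Printing Implicit Defensive.
Import Order.TTheory GRing.Theory Num.Theory.
Local Open Scope ring_scope.

(* For g in Gamma_{2m}(2) the off-diagonal blocks vanish mod 2m, so tau(g) = g mod 4m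
   and tau(g) g^-1 lies in Gamma(4m); it is a cocycle because tau is an involutive
   automorphism, and it only depends on the double coset because tau fixes
   Gamma_l(2).  If tau(h) tau(g) g^-1 h^-1 = tau(g') g'^-1, then x = g^-1 h^-1 g' is
   tau-fixed, i.e. block diagonal, symplectic and = I mod 2, so x lies in Gamma_l(2).
   For surjectivity let D = diag(I, -I), so that tau(g) = D g D.  A cocycle c gives
   the involution s = D c, which reverses the symplectic form J; since s = D mod 4m,
   the eigenprojection P = (I + s)/2 is integral and = diag(I, 0) mod 2m.  By Smith
   normal form the first n columns of P are Y M with M = I mod 2 and Y primitive
   (Z Y = I for some Z); with W := -J Z^T we get Y^T J W = I, and g = (Y, (I - P) W)
   is symplectic because eigenvectors of s for the same eigenvalue are J-orthogonal.
   Then s g = g D, i.e. tau(g) = c g, and the congruences of P put g in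
   Gamma_{2m}(2). *)

Lemma int_mx_double_inj p q (A B : 'M[int]_(p, q)) : A *+ 2 = B *+ 2 -> A = B.
Proof.
move=> /eqP; rewrite -subr_eq0 -mulrnBl -scaler_nat scalemx_eq0 subr_eq0.
by case/orP=> // /eqP.
Qed.

Lemma int_mx_oppI p q (A : 'M[int]_(p, q)) : A = - A -> A = 0.
Proof. by move=> eA; apply: int_mx_double_inj; rewrite mul0rn mulr2n {2}eA subrr. Qed.

Section Symplectic.
Variable n : nat.
Implicit Types g h x : imx n.
Local Notation J := (Jmx n).

Definition Dmx : imx n := block_mx 1%:M 0 0 (- 1%:M).

Lemma DmxK : Dmx *m Dmx = 1%:M.
Proof.
rewrite /Dmx mulmx_block !(mulmx0, mul0mx, addr0, add0r, mulmx1, mulNmx, opprK).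
by rewrite mul1mx opprK -scalar_mx_block.
Qed.

Lemma trDmx : Dmx^T = Dmx.
Proof. by rewrite /Dmx tr_block_mx !trmx0 trmx1 linearN /= trmx1. Qed.

Lemma tauE g : tau g = Dmx *m g *m Dmx.
Proof.
rewrite -[g]submxK /tau /Dmx block_mxKul block_mxKur block_mxKdl block_mxKdr !mulmx_block.
by rewrite !(mulmx0, mul0mx, addr0, add0r, mulmx1, mul1mx, mulNmx, mulmxN, opprK).
Qed.

Lemma tau_mul g h : tau (g *m h) = tau g *m tau h.
Proof. by rewrite !tauE !mulmxA -(mulmxA _ Dmx Dmx) DmxK mulmx1. Qed.

Lemma tauK g : tau (tau g) = g.
Proof. by rewrite !tauE !mulmxA DmxK mul1mx -mulmxA DmxK mulmx1. Qed.

Lemma tau1 : tau (1%:M : imx n) = 1%:M.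
Proof. by rewrite tauE mulmx1 DmxK. Qed.

Lemma tau_block_diag (U V : 'M[int]_n) : tau (block_mx U 0 0 V) = block_mx U 0 0 V.
Proof. by rewrite /tau block_mxKul block_mxKur block_mxKdl block_mxKdr !oppr0. Qed.

Lemma tau_fixed_block_diag x : tau x = x -> x = block_mx (ulsubmx x) 0 0 (drsubmx x).
Proof.
move=> tx; have /eq_block_mx[_ /esym/int_mx_oppI ur0 /esym/int_mx_oppI dl0 _] :
  tau x = block_mx (ulsubmx x) (ursubmx x) (dlsubmx x) (drsubmx x) by rewrite submxK.
by rewrite -{1}[x]submxK ur0 dl0.
Qed.

Lemma trJmx : J^T = - J.
Proof.
by rewrite /Jmx tr_block_mx !trmx0 trmx1 linearN /= trmx1 opp_block_mx !oppr0 opprK.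
Qed.

Lemma JmxJmx : J *m J = - 1%:M.
Proof.
rewrite /Jmx mulmx_block !(mulmx0, mul0mx, addr0, add0r, mulmx1, mulNmx, mulmxN, mul1mx).
by rewrite [in RHS]scalar_mx_block opp_block_mx !oppr0.
Qed.

Lemma Dmx_Jmx_Dmx : Dmx *m J *m Dmx = - J.
Proof.
rewrite /Dmx /Jmx !mulmx_block.
rewrite !(mulmx0, mul0mx, addr0, add0r, mulmx1, mulNmx, mulmxN, mul1mx, opprK).
by rewrite opp_block_mx !oppr0 opprK.
Qed.

Lemma symplectic_unit g : symplectic g -> g \in unitmx.
Proof.
move=> sg; have /mulmx1_unit[] // : (- J *m g^T *m J) *m g = 1%:M.
by rewrite -!mulmxA (mulmxA g^T) sg mulNmx JmxJmx opprK.
Qed.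

Lemma invmx_mul g h : g \in unitmx -> h \in unitmx ->
  invmx (g *m h) = invmx h *m invmx g.
Proof.
move=> ug uh; have ugh : g *m h \in unitmx by rewrite unitmx_mul ug.
have e : g *m h *m (invmx h *m invmx g) = 1%:M.
  by rewrite -mulmxA (mulmxA h) mulmxV // mul1mx mulmxV.
by rewrite -[LHS]mulmx1 -e mulmxA mulVmx // mul1mx.
Qed.

Lemma symplectic1 : symplectic (1%:M : imx n).
Proof. by rewrite /symplectic trmx1 mul1mx mulmx1. Qed.

Lemma symplectic_mul g h : symplectic g -> symplectic h -> symplectic (g *m h).
Proof.
move=> sg sh; rewrite /symplectic trmx_mul -!mulmxA (mulmxA g^T) (mulmxA _ g).
by rewrite sg mulmxA.
Qed.

Lemma symplectic_inv g : symplectic g -> symplectic (invmx g).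
Proof.
move=> sg; have ug := symplectic_unit sg; rewrite /symplectic -{1}sg.
by rewrite !mulmxA -trmx_mul mulmxV // trmx1 mul1mx mulmxK.
Qed.

Lemma symplectic_tau g : symplectic g -> symplectic (tau g).
Proof.
move=> sg; have DJD p (X : 'M[int]_(p, n + n)) : X *m Dmx *m J *m Dmx = - (X *m J).
  by rewrite -!mulmxA (mulmxA Dmx) Dmx_Jmx_Dmx mulmxN.
rewrite /symplectic tauE !trmx_mul trDmx !mulmxA DJD !mulNmx.
by rewrite -(mulmxA Dmx g^T) -(mulmxA Dmx (g^T *m J)) sg Dmx_Jmx_Dmx opprK.
Qed.

Lemma symplectic_blockE g :
  symplectic g -> (ulsubmx g)^T *m drsubmx g - (dlsubmx g)^T *m ursubmx g = 1%:M.
Proof.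
rewrite /symplectic -[g in g^T]submxK -[g in _ *m g]submxK tr_block_mx /Jmx !mulmx_block.
rewrite !(mulmx0, mul0mx, addr0, add0r, mulmx1, mulNmx, mulmxN).
by case/eq_block_mx=> _ /esym; rewrite addrC.
Qed.

Lemma symplectic_row_mx (X Y : 'M[int]_(n + n, n)) :
    X^T *m J *m X = 0 -> Y^T *m J *m Y = 0 -> X^T *m J *m Y = 1%:M ->
  symplectic (row_mx X Y).
Proof.
move=> JXX JYY JXY; have JYX : Y^T *m J *m X = - 1%:M.
  have /(congr1 trmx) : (Y^T *m J *m X)^T = - 1%:M.
    by rewrite !trmx_mul trmxK trJmx mulNmx mulmxN mulmxA JXY.
  by rewrite trmxK linearN /= trmx1.
by rewrite /symplectic tr_row_mx mul_col_mx mul_col_row JXX JXY JYX JYY.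
Qed.

Lemma anti_symplectic_eigen_isotropic (s : imx n) (e : int) p q
    (X : 'M[int]_(n + n, p)) (Y : 'M[int]_(n + n, q)) :
    s^T *m J *m s = - J -> e * e = 1 -> s *m X = e *: X -> s *m Y = e *: Y ->
  X^T *m J *m Y = 0.
Proof.
move=> sJs ee sX sY; apply: int_mx_oppI.
transitivity ((s *m X)^T *m J *m (s *m Y)).
  by rewrite sX sY -scalemxAr linearZ /= -!scalemxAl scalerA ee scale1r.
by rewrite trmx_mul !mulmxA -(mulmxA X^T s^T J) -(mulmxA X^T _ s) sJs mulmxN mulNmx.
Qed.
End Symplectic.

Definition mx_cong (k : int) p q (A B : 'M[int]_(p, q)) := exists K, A - B = k *: K.

Lemma congr_mxP (k : int) p q (A B : 'M[int]_(p, q)) : congr_mx k A B <-> mx_cong k A B.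
Proof.
split=> [kAB | [K eK] i j].
  exists (\matrix_(i, j) ((A i j - B i j) %/ k)%Z); apply/matrixP=> i j.
  by rewrite !mxE mulrC divzK.
have := congr1 (fun M : 'M_(p, q) => M i j) eK; rewrite !mxE /= => ->.
exact: dvdz_mulr.
Qed.

Section Congruence.
Variable k : int.
Implicit Types p q r : nat.

Lemma mx_cong_refl p q (A : 'M[int]_(p, q)) : mx_cong k A A.
Proof. by exists 0; rewrite subrr scaler0. Qed.

Lemma mx_cong_sym p q (A B : 'M[int]_(p, q)) : mx_cong k A B -> mx_cong k B A.
Proof. by case=> K eK; exists (- K); rewrite scalerN -eK opprB. Qed.

Lemma mx_cong_trans p q (A B C : 'M[int]_(p, q)) :
  mx_cong k A B -> mx_cong k B C -> mx_cong k A C.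
Proof. by case=> K1 e1 [K2 e2]; exists (K1 + K2); rewrite scalerDr -e1 -e2 addrA subrK. Qed.

Lemma mx_congD p q (A B C D : 'M[int]_(p, q)) :
  mx_cong k A B -> mx_cong k C D -> mx_cong k (A + C) (B + D).
Proof.
by case=> K1 e1 [K2 e2]; exists (K1 + K2); rewrite scalerDr -e1 -e2 opprD addrACA.
Qed.

Lemma mx_congN p q (A B : 'M[int]_(p, q)) : mx_cong k A B -> mx_cong k (- A) (- B).
Proof. by case=> K eK; exists (- K); rewrite scalerN -eK opprD. Qed.

Lemma mx_cong_linear p q p' q' (f : {linear 'M[int]_(p, q) -> 'M[int]_(p', q')})
  (A B : 'M[int]_(p, q)) : mx_cong k A B -> mx_cong k (f A) (f B).
Proof. by case=> K eK; exists (f K); rewrite -linearB eK linearZ. Qed.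

Lemma mx_congM p q r (A A' : 'M[int]_(p, q)) (B B' : 'M[int]_(q, r)) :
  mx_cong k A A' -> mx_cong k B B' -> mx_cong k (A *m B) (A' *m B').
Proof.
move=> AA' BB'; apply: (@mx_cong_trans _ _ _ (A *m B')).
  by apply: mx_cong_linear.
by rewrite -[A *m B']/(mulmxr B' A) -[A' *m B']/(mulmxr B' A'); apply: mx_cong_linear.
Qed.

Lemma mx_cong_block p1 p2 q1 q2 (A1 B1 : 'M[int]_(p1, q1)) (A2 B2 : 'M[int]_(p1, q2))
    (A3 B3 : 'M[int]_(p2, q1)) (A4 B4 : 'M[int]_(p2, q2)) :
    mx_cong k A1 B1 -> mx_cong k A2 B2 -> mx_cong k A3 B3 -> mx_cong k A4 B4 ->
  mx_cong k (block_mx A1 A2 A3 A4) (block_mx B1 B2 B3 B4).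
Proof.
case=> K1 e1 [K2 e2] [K3 e3] [K4 e4]; exists (block_mx K1 K2 K3 K4).
by rewrite opp_block_mx add_block_mx e1 e2 e3 e4 scale_block_mx.
Qed.

Lemma mx_cong_inv p (g : 'M[int]_p) :
  g \in unitmx -> mx_cong k g 1%:M -> mx_cong k (invmx g) 1%:M.
Proof.
move=> ug [K eK]; exists (- (invmx g *m K)).
by rewrite scalerN scalemxAr -eK mulmxBr mulVmx // mulmx1 opprB.
Qed.
End Congruence.

Lemma mx_cong_dvd (k k' : int) p q (A B : 'M[int]_(p, q)) :
  (k %| k')%Z -> mx_cong k' A B -> mx_cong k A B.
Proof. by case/dvdzP=> c -> [K eK]; exists (c *: K); rewrite eK scalerA mulrC. Qed.

Lemma mx_cong2_F2 p q (A B : 'M[int]_(p, q)) :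
  mx_cong 2 A B <-> map_mx (intr : int -> 'F_2) A = map_mx intr B.
Proof.
have dvd2E (x : int) : (2 %| x)%Z = ((x%:~R : 'F_2) == 0).
  exact: (dvdz_pcharf (pchar_Fp (isT : prime 2))).
split=> [/congr_mxP AB | /matrixP AB]; last apply/congr_mxP => i j.
  by apply/matrixP=> i j; rewrite !mxE; apply/eqP; rewrite -subr_eq0 -rmorphB /= -dvd2E.
by rewrite dvd2E rmorphB /= subr_eq0; have := AB i j; rewrite !mxE => ->.
Qed.

Section CocycleOfDoubleCoset.
Variables n m : nat.
Implicit Types g h x : imx n.

Lemma dvdz_2_2m : (2 %| (2 * m)%N%:Z)%Z.
Proof. by rewrite PoszM dvdz_mulr. Qed.

Lemma dvdz_2_4m : (2 %| (4 * m)%N%:Z)%Z.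
Proof. by rewrite (_ : 4 * m = 2 * (2 * m))%N ?PoszM ?dvdz_mulr // mulnA. Qed.

Lemma Gamma2m2_cong2 g : Gamma2m2 m g -> mx_cong 2 g 1%:M.
Proof.
case=> _ /congr_mxP cA /congr_mxP cD /congr_mxP cB /congr_mxP cC.
rewrite -[g]submxK (scalar_mx_block n n 1).
by apply: mx_cong_block => //; apply: mx_cong_dvd dvdz_2_2m _.
Qed.

Lemma Gamma4m_cong2 h : Gamma4m m h -> mx_cong 2 h 1%:M.
Proof. by case=> _ /congr_mxP; apply: mx_cong_dvd dvdz_2_4m. Qed.

Lemma tau_cong_Gamma2m2 g : Gamma2m2 m g -> mx_cong (4 * m)%N%:Z (tau g) g.
Proof.
case=> _ _ _ /congr_mxP[KB] /[!subr0] eB /congr_mxP[KC] /[!subr0] eC.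
have twice (K : 'M[int]_n) :
    - ((2 * m)%N%:Z *: K) - (2 * m)%N%:Z *: K = (4 * m)%N%:Z *: - K.
  by rewrite -opprD -scalerDl -PoszD scalerN -mulnDl.
exists (block_mx 0 (- KB) (- KC) 0).
rewrite /tau -[X in _ - X]submxK opp_block_mx add_block_mx scale_block_mx.
by rewrite !subrr !scaler0 eB eC !twice.
Qed.

Lemma cocycle_of_Gamma2m2 g : Gamma2m2 m g -> cocycle m (cocycle_of g).
Proof.
move=> Gg; have [sg _ _ _ _] := Gg; have ug := symplectic_unit sg.
split; last by rewrite /cocycle_of tau_mul tauK mulmxA mulmxKV // -tau_mul mulmxV // tau1.
split; first exact: symplectic_mul (symplectic_tau sg) (symplectic_inv sg).
apply/congr_mxP; rewrite /cocycle_of -(mulmxV ug).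
by apply: mx_congM (tau_cong_Gamma2m2 Gg) (mx_cong_refl _ _).
Qed.

Lemma cohomologous_cocycle_of_dcoset g g' :
  Gamma2m2 m g -> same_dcoset m g g' -> cohomologous m (cocycle_of g) (cocycle_of g').
Proof.
move=> [sg _ _ _ _] [a [u [Ga [U [uU _ ->]] ->]]]; exists a; split=> //.
have [ua ug] := conj (symplectic_unit Ga.1) (symplectic_unit sg).
have uu : block_mx U 0 0 (invmx U^T) \in unitmx.
  by rewrite block_diag_mx_unit uU unitmx_inv unitmx_tr.
rewrite /cocycle_of !tau_mul tau_block_diag !invmx_mul ?unitmx_mul ?ua //.
by rewrite !mulmxA mulmxK.
Qed.

Lemma Gammal2_of_tau_fixed x :
  symplectic x -> tau x = x -> mx_cong 2 x 1%:M -> Gammal2 x.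
Proof.
move=> + /tau_fixed_block_diag ex; rewrite ex.
set U := ulsubmx x; set V := drsubmx x => sx cx.
have UV : U^T *m V = 1%:M.
  have := symplectic_blockE sx.
  by rewrite block_mxKul block_mxKdr block_mxKdl trmx0 mul0mx subr0.
have uUT : U^T \in unitmx by case: (mulmx1_unit UV).
exists U; split.
- by rewrite -unitmx_tr.
- have : mx_cong 2 (ulsubmx (block_mx U 0 0 V)) (ulsubmx (1%:M : imx n)).
    by rewrite /ulsubmx; do 2 apply: mx_cong_linear.
  by rewrite (scalar_mx_block n n 1) !block_mxKul => /congr_mxP.
- by rewrite -[V](mulKmx uUT) UV mulmx1.
Qed.

Lemma same_dcoset_of_cohomologous g g' : Gamma2m2 m g -> Gamma2m2 m g' ->
  cohomologous m (cocycle_of g) (cocycle_of g') -> same_dcoset m g g'.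
Proof.
move=> Gg Gg' [h [Gh e]].
have [[sg _ _ _ _] [sg' _ _ _ _] [sh _]] := And3 Gg Gg' Gh.
have [ug ug' uh] := And3 (symplectic_unit sg) (symplectic_unit sg') (symplectic_unit sh).
set x := invmx g *m invmx h *m g'.
have hgx : h *m g *m x = g' by rewrite /x !mulmxA mulmxK // mulmxV // mul1mx.
exists h, x; split=> //; apply: Gammal2_of_tau_fixed.
- exact: symplectic_mul (symplectic_mul (symplectic_inv sg) (symplectic_inv sh)) sg'.
- have uthg : tau (h *m g) \in unitmx.
    exact: symplectic_unit (symplectic_tau (symplectic_mul sh sg)).
  rewrite -[LHS](mulKmx uthg) -[RHS](mulKmx uthg) -tau_mul hgx.
  move/(congr1 (mulmx^~ g')): e; rewrite /cocycle_of mulmxKV // => ->.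
  by rewrite tau_mul /x !mulmxA.
- have := mx_congM (mx_congM (mx_cong_inv ug (Gamma2m2_cong2 Gg))
    (mx_cong_inv uh (Gamma4m_cong2 Gh))) (Gamma2m2_cong2 Gg').
  by rewrite !mul1mx.
Qed.

Lemma Gamma2m2_of_blocks g : symplectic g -> mx_cong 2 (ulsubmx g) 1%:M ->
    mx_cong (2 * m)%N%:Z (ursubmx g) 0 -> mx_cong (2 * m)%N%:Z (dlsubmx g) 0 ->
  Gamma2m2 m g.
Proof.
move=> sg cA cB cC; split=> //; apply/congr_mxP => //.
have cAT : mx_cong 2 (ulsubmx g)^T 1%:M by rewrite -trmx1; apply: mx_cong_linear.
apply: (@mx_cong_trans _ _ _ _ ((ulsubmx g)^T *m drsubmx g)).
  by have := mx_congM (mx_cong_sym cAT) (mx_cong_refl 2 (drsubmx g)); rewrite mul1mx.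
rewrite -(subrK ((dlsubmx g)^T *m ursubmx g) (_ *m _)) symplectic_blockE //.
rewrite -[X in mx_cong _ _ X]addr0; apply: mx_congD; first exact: mx_cong_refl.
have cCT : mx_cong 2 (dlsubmx g)^T 0.
  by rewrite -(trmx0 int); apply: mx_cong_linear; apply: mx_cong_dvd dvdz_2_2m cC.
by have := mx_congM cCT (mx_cong_refl 2 (ursubmx g)); rewrite mul0mx.
Qed.
End CocycleOfDoubleCoset.

Lemma mx_cong_halve (k : int) p q (A E : 'M[int]_(p, q)) :
  mx_cong (k *+ 2) A (E *+ 2) -> exists2 P, P *+ 2 = A & mx_cong k P E.
Proof.
case=> K eK; exists (E + k *: K); last by exists K; rewrite addrC addKr.
by rewrite mulrnDl scalerMnl -eK addrC subrK.
Qed.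

Lemma involution_half_eigen p (s P : 'M[int]_p) :
  s *m s = 1%:M -> P *+ 2 = 1%:M + s -> s *m P = P /\ s *m (1%:M - P) = - (1%:M - P).
Proof.
move=> ss P2; have sP : s *m P = P.
  by apply: int_mx_double_inj; rewrite mulr2n -mulmxDr -mulr2n P2 mulmxDr mulmx1 ss addrC.
split=> //; rewrite mulmxBr mulmx1 sP opprB.
have -> : s = P *+ 2 - 1%:M by rewrite P2 addrC addKr.
by rewrite mulr2n addrAC addrK.
Qed.

Lemma mulmxI_det (R : idomainType) p q (M : 'M[R]_q) (A B : 'M[R]_(p, q)) :
  \det M != 0 -> A *m M = B *m M -> A = B.
Proof.
move=> dM eAB; apply/eqP; rewrite -subr_eq0.
have : (A - B) *m M *m \adj M == 0 by rewrite mulmxBl eAB subrr mul0mx.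
by rewrite -mulmxA mul_mx_adj mul_mx_scalar scalemx_eq0 (negbTE dM).
Qed.

Lemma F2_neq0 (x : 'F_2) : x != 0 -> x = 1.
Proof. by case: x => [[|[|k]]] //= lt_k _; apply: val_inj. Qed.

Lemma det_cong2 p (M : 'M[int]_p) : mx_cong 2 M 1%:M -> (\det M)%:~R = 1 :> 'F_2.
Proof. by move/mx_cong2_F2; rewrite map_mx1 -det_map_mx => ->; rewrite det1. Qed.

Lemma det_cong2_neq0 p (M : 'M[int]_p) : mx_cong 2 M 1%:M -> \det M != 0.
Proof.
move/det_cong2=> d1; apply/eqP=> d0; move: d1.
by rewrite d0 rmorph0 => /eqP; rewrite eq_sym oner_eq0.
Qed.

Lemma int_mx_factor_mod2 p r (X : 'M[int]_(p + r, p)) : mx_cong 2 (usubmx X) 1%:M ->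
  exists Y, exists M, exists2 Z,
    X = Y *m M /\ mx_cong 2 M 1%:M & Z *m Y = 1%:M.
Proof.
move=> cX; have [L uL [R uR [d _ eX]]] := int_Smith_normal_form X.
set Dl : 'M[int]_p := diag_mx (\row_j d`_j).
have eS : (\matrix_(i, j) (d`_i *+ (i == j :> nat)) : 'M_(p + r, p)) = col_mx 1%:M 0 *m Dl.
  rewrite mul_col_mx mul1mx mul0mx; apply/matrixP=> i j; rewrite !mxE.
  case: splitP => k ek; rewrite !mxE ek //=.
  by rewrite eqn_leq leqNgt (leq_trans (ltn_ord j) (leq_addr _ _)) /= mulr0n.
have {}eX : X = L *m col_mx 1%:M 0 *m Dl *m R by rewrite eX eS !mulmxA.
have d1 (j : 'I_p) : (d`_j)%:~R = 1 :> 'F_2.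
  apply: F2_neq0; apply/eqP => dj0.
  have := det_cong2 cX; rewrite eX -!mul_usub_mx !det_mulmx det_diag !rmorphM rmorph_prod.
  by rewrite (bigD1 j) //= mxE dj0 mul0r mulr0 mul0r => /eqP; rewrite eq_sym oner_eq0.
have cDl : mx_cong 2 Dl 1%:M.
  apply/mx_cong2_F2; apply/matrixP=> i j; rewrite !mxE.
  by case: (i == j); rewrite ?mulr1n ?mulr0n ?d1.
exists (L *m col_mx 1%:M 0 *m R), (invmx R *m Dl *m R).
exists (invmx R *m row_mx 1%:M 0 *m invmx L).
  split; first by rewrite !mulmxA mulmxK.
  have := mx_congM (mx_congM (mx_cong_refl 2 (invmx R)) cDl) (mx_cong_refl 2 R).
  by rewrite mulmx1 mulVmx.
rewrite !mulmxA mulmxKV // -(mulmxA (invmx R)) mul_row_col mul1mx mul0mx addr0 mulmx1.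
exact: mulVmx.
Qed.

Definition upper_proj n : imx n := block_mx 1%:M 0 0 0.

Section AdaptedSymplecticBasis.
Variables (n m : nat) (s P : imx n).
Hypotheses (ss : s *m s = 1%:M) (sJs : s^T *m Jmx n *m s = - Jmx n).
Hypotheses (P2 : P *+ 2 = 1%:M + s) (PE : mx_cong (2 * m)%N%:Z P (upper_proj n)).

Let sP : s *m P = P. Proof. by have [] := involution_half_eigen ss P2. Qed.
Let sQ : s *m (1%:M - P) = - (1%:M - P).
Proof. by have [] := involution_half_eigen ss P2. Qed.

Lemma primitive_plus_eigenbasis :
  exists Y : 'M[int]_(n + n, n), exists2 Z : 'M_(n, n + n),
  [/\ s *m Y = Y, mx_cong 2 (usubmx Y) 1%:M & mx_cong (2 * m)%N%:Z (dsubmx Y) 0]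
  & Z *m Y = 1%:M.
Proof.
set X := P *m col_mx 1%:M 0.
have cX : mx_cong (2 * m)%N%:Z X (col_mx 1%:M 0).
  have := mx_congM PE (mx_cong_refl _ (col_mx (1%:M : 'M[int]_n) 0)).
  by rewrite /upper_proj mul_block_col !mul0mx mul1mx !addr0.
have cuX : mx_cong 2 (usubmx X) 1%:M.
  rewrite -(col_mxKu 1%:M (0 : 'M[int]_n)); apply: mx_cong_linear.
  exact: mx_cong_dvd (dvdz_2_2m m) cX.
have [Y [M [Z [eX cM] ZY]]] := int_mx_factor_mod2 cuX.
have sY : s *m Y = Y.
  apply: (mulmxI_det (det_cong2_neq0 cM)).
  by rewrite -mulmxA -eX /X mulmxA sP.
have PY : P *m Y = Y.
  by apply: int_mx_double_inj; rewrite mulr2n -mulmxDl -mulr2n P2 mulmxDl mul1mx sY.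
exists Y, Z => //; split=> //.
  apply: mx_cong_trans cuX; rewrite eX -mul_usub_mx.
  by have := mx_congM (mx_cong_refl 2 (usubmx Y)) (mx_cong_sym cM); rewrite mulmx1.
have -> : (0 : 'M_n) = dsubmx (upper_proj n *m Y).
  by rewrite -mul_dsub_mx /upper_proj /block_mx col_mxKd row_mx0 mul0mx.
by rewrite -{1}PY; apply: mx_cong_linear; apply: mx_congM PE (mx_cong_refl _ Y).
Qed.

Lemma adapted_symplectic_basis : exists2 g : imx n, Gamma2m2 m g & s *m g = g *m Dmx n.
Proof.
have [Y [Z [sY cuY cdY] ZY]] := primitive_plus_eigenbasis.
set W := - (Jmx n *m Z^T); set Ym := (1%:M - P) *m W.
have YJW : Y^T *m Jmx n *m W = 1%:M.
  rewrite /W mulmxN -mulmxA (mulmxA (Jmx n)) JmxJmx mulNmx mul1mx mulmxN opprK.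
  by rewrite -trmx_mul ZY trmx1.
have sYm : s *m Ym = - Ym by rewrite mulmxA sQ mulNmx.
have iso := anti_symplectic_eigen_isotropic sJs.
have YJY : Y^T *m Jmx n *m Y = 0 by apply: (iso 1); rewrite ?mulr1 ?scale1r.
have YmJYm : Ym^T *m Jmx n *m Ym = 0.
  by apply: (iso (-1)); rewrite ?mulrNN ?mulr1 ?scaleN1r.
have YJYm : Y^T *m Jmx n *m Ym = 1%:M.
  have YJPW : Y^T *m Jmx n *m (P *m W) = 0.
    by apply: (iso 1); rewrite ?mulr1 ?scale1r ?mulmxA ?sP.
  by rewrite /Ym mulmxBl mul1mx mulmxBr YJW YJPW subr0.
have eg : row_mx Y Ym = block_mx (usubmx Y) (usubmx Ym) (dsubmx Y) (dsubmx Ym).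
  by rewrite block_mxEh !vsubmxK.
exists (row_mx Y Ym).
  apply: Gamma2m2_of_blocks; rewrite ?eg ?block_mxKul ?block_mxKur ?block_mxKdl //.
    by rewrite -eg; apply: symplectic_row_mx.
  have -> : (0 : 'M_n) = usubmx ((1%:M - upper_proj n) *m W).
    rewrite -mul_usub_mx /upper_proj (scalar_mx_block n n 1) opp_block_mx add_block_mx.
    by rewrite /block_mx col_mxKu !subrr row_mx0 mul0mx.
  apply: mx_cong_linear; apply: mx_congM (mx_cong_refl _ W).
  exact: mx_congD (mx_cong_refl _ _) (mx_congN PE).
rewrite mul_mx_row sY sYm /Dmx mul_row_block !mulmx0 !mulmx1 addr0 add0r.
by rewrite mulmxN mulmx1.
Qed.
End AdaptedSymplecticBasis.

Lemma cocycle_of_surjective n m (c : imx n) :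
  cocycle m c -> exists2 g : imx n, Gamma2m2 m g & cocycle_of g = c.
Proof.
move=> [[sc /congr_mxP cc] ctc]; set s := Dmx n *m c.
have ss : s *m s = 1%:M by rewrite /s mulmxA; apply: mulmx1C; rewrite -tauE.
have sJs : s^T *m Jmx n *m s = - Jmx n.
  rewrite /s trmx_mul trDmx !mulmxA -(mulmxA c^T) -(mulmxA c^T) Dmx_Jmx_Dmx.
  by rewrite mulmxN mulNmx sc.
have [P P2 PE] : exists2 P, P *+ 2 = 1%:M + s & mx_cong (2 * m)%N%:Z P (upper_proj n).
  apply: mx_cong_halve.
  have -> : upper_proj n *+ 2 = 1%:M + Dmx n.
    by rewrite /upper_proj /Dmx (scalar_mx_block n n 1) mulr2n !add_block_mx !addr0 subrr.
  rewrite mulr2n -PoszD -mulnDl; apply: mx_congD (mx_cong_refl _ _) _.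
  by have := mx_congM (mx_cong_refl _ (Dmx n)) cc; rewrite mulmx1.
have [g Gg sg] := adapted_symplectic_basis ss sJs P2 PE.
have [sgp _ _ _ _] := Gg; exists g => //.
rewrite /cocycle_of tauE -(mulmxA (Dmx n) g) -sg /s !mulmxA DmxK mul1mx mulmxK //.
exact: symplectic_unit.
Qed.

Theorem lemma4p2 (n m : nat) (hm : (1 <= m)%N) :
  (* the map lands in cocycles *)
  (forall g : imx n, Gamma2m2 m g -> cocycle m (cocycle_of g)) /\
  (* well-defined on double cosets *)
  (forall g g' : imx n, Gamma2m2 m g -> Gamma2m2 m g' ->
     same_dcoset m g g' -> cohomologous m (cocycle_of g) (cocycle_of g')) /\
  (* injective on double cosets *)
  (forall g g' : imx n, Gamma2m2 m g -> Gamma2m2 m g' ->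
     cohomologous m (cocycle_of g) (cocycle_of g') -> same_dcoset m g g') /\
  (* surjective onto H^1 *)
  (forall c : imx n, cocycle m c ->
     exists2 g : imx n, Gamma2m2 m g & cohomologous m c (cocycle_of g)).
Proof.
(* [hm] is unused: for m = 0 the congruences are equalities and the argument still works. *)
split; first exact: cocycle_of_Gamma2m2.
split; first by move=> g g' Gg _; apply: cohomologous_cocycle_of_dcoset.
split; first exact: same_dcoset_of_cohomologous.
move=> c /cocycle_of_surjective[g Gg <-]; exists g => //; exists 1%:M.
split; first by split; [exact: symplectic1 | apply/congr_mxP; exact: mx_cong_refl].
by rewrite tau1 mul1mx invmx1 mulmx1.
Qed.
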